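(* Consider the population game without a central planner, i.e. with threshold $A_t = 1$ for all $t \in [0,T]$. Suppose $g_{eq} \in C[0,T]$ with $g_{eq,t} \in [0,1]$ is a symmetric (Nash) equilibrium exposure profile, i.e. $$J_\alpha(g_{eq}, g_{eq}, 1) \le J_\alpha(g_{eq}, g^\alpha, 1)$$ for every admissible individual strategy $g^\alpha \in C[0,T]$ with $g^\alpha_t\in[0,1]$, and the canonical individual's equilibrium strategy equals $g_{eq}$. Then, by the Pontryagin minimum principle, there is an adjoint function $\lambda$ on $[0,T]$ such that for all $t\in[0,T]$ $$g_{eq,t}=\min\Big(\frac{B}{\beta I_t (C-\lambda_t)},1\Big)\mathbf 1_{\{C>\lambda_t\}}+\mathbf 1_{\{C\le\lambda_t\}},$$ and $(S,I,\lambda)$ satisfy $$\frac{dS_t}{dt}=-\beta g_{eq,t}^2S_tI_t,\qquad \frac{dI_t}{dt}=\beta g_{eq,t}^2S_tI_t-\gamma I_t,\qquad \frac{d\lambda_t}{dt}=g_{eq,t}\big(B-\beta I_t g_{eq,t}(C-\lambda_t)\big),$$ with boundary conditions $S_0=1-\epsilon$, $I_0=\epsilon$, $\lambda_T=-R$.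
   Context: Model: a finite horizon $T>0$; positive real constants $\beta$ (infection probability per interaction), $\gamma$ (recovery rate), $\epsilon$ (initial infected fraction), $B$ (benefit rate per unit exposure), $C$ (one-time cost of infection), $R$ (reward for surviving to $T$). The population plays a symmetric exposure profile $g\in C[0,T]$ and the susceptible and infected fractions evolve by $\dot S_t=-\beta g_t^2S_tI_t$, $\dot I_t=\beta g_t^2S_tI_t-\gamma I_t$, $S_0=1-\epsilon$, $I_0=\epsilon$. A canonical individual $\alpha$ playing $g^\alpha\in C[0,T]$ is infected at a random time $\tau_\alpha$ whose survival probability $P_t:=P(\tau_\alpha>t)$ satisfies $\dot P_t=-\beta g^\alpha_t g_t I_t P_t$, $P_0=1$. A planner strategy is $A\in C[0,T]$ with $A_t\in[0,1]$, and the individual must satisfy $g^\alpha_t, g_t\le A_t$. The individual's cost is $$J_\alpha(g,g^\alpha,A)=\int_0^T P_t\, g^\alpha_t\{-B+C\beta g_tI_t\}\,dt-R\,P_T,$$ equivalently $\mathbb E\big[-\int_0^{T\wedge\tau_\alpha}Bg^\alpha_s\,ds+C\mathbf 1_{\{\tau_\alpha\le T\}}-R\mathbf 1_{\{\tau_\alpha>T\}}\big]$. *)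

From Stdlib Require Import Reals.
From Coquelicot Require Import Coquelicot.
Open Scope R_scope.

Definition cont_on (T : R) (f : R -> R) : Prop :=
  forall x, 0 <= x <= T ->
    filterlim f (within (fun y => 0 <= y <= T) (locally x)) (locally (f x)).

Definition admissible (T : R) (A f : R -> R) : Prop :=
  cont_on T f /\ forall t, 0 <= t <= T -> 0 <= f t <= A t.

Definition solves_SI (beta gamma eps T : R) (g S I : R -> R) : Prop :=
  cont_on T S /\ cont_on T I /\ S 0 = 1 - eps /\ I 0 = eps /\
  forall t, 0 < t < T ->
    is_derive S t (- beta * (g t)^2 * S t * I t) /\
    is_derive I t (beta * (g t)^2 * S t * I t - gamma * I t).

(* P_t = P(tau_alpha > t) for the individual playing ga against population g. *)
Definition solves_P (beta T : R) (g I ga P : R -> R) : Prop :=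
  cont_on T P /\ P 0 = 1 /\
  forall t, 0 < t < T -> is_derive P t (- beta * ga t * g t * I t * P t).

Definition Jcost (beta B C Rw T : R) (g I ga P : R -> R) : R :=
  RInt (fun t => P t * ga t * (- B + C * beta * g t * I t)) 0 T - Rw * P T.

From Stdlib Require Import Reals Lra.
From Coquelicot Require Import Coquelicot.
Open Scope R_scope.

(* Fix the equilibrium profile g and the infected fraction I, and let
   k = beta g I be the infection pressure an individual faces per unit of own
   exposure.  An individual playing h then survives with probability
   P_h = exp (- int_0^t h k), and we define the adjoint lam explicitly by
   variation of constants, so that lam' = g (B - k (C - lam)) and lam T = - Rw.
   Differentiating P_h lam along time yields the cost decomposition
       J(h) = lam(0) + int_0^T P_h (h - g) phi,   phi = - B + k (C - lam),
   so J(g) = lam(0).  Testing the Nash inequality against the admissible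
   deviation clamp_[0,1] (g - phi), for which (h - g) phi <= 0, forces the
   integrand to vanish identically: g = 1 where phi < 0 and g = 0 where phi > 0.
   Pointwise minimisation then gives phi <= 0 and the closed form of g; the
   division by I is justified since I solves a linear equation with I(0) > 0. *)

Definition continuous_R (f : R -> R) : Prop := forall x, continuous f x.

(* Real-valued specialisations of Coquelicot's continuity rules (stated with
   Rmult/Rplus so that they apply to real expressions by plain unification). *)
Lemma continuous_Rmult (f g : R -> R) x :
  continuous f x -> continuous g x -> continuous (fun y => f y * g y) x.
Proof. intros; now apply (continuous_mult f g). Qed.
Lemma continuous_Rplus (f g : R -> R) x :
  continuous f x -> continuous g x -> continuous (fun y => f y + g y) x.
Proof. intros; now apply (continuous_plus f g). Qed.
Lemma continuous_Rminus (f g : R -> R) x :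
  continuous f x -> continuous g x -> continuous (fun y => f y - g y) x.
Proof. intros; now apply (continuous_minus f g). Qed.
Lemma continuous_Ropp (f : R -> R) x :
  continuous f x -> continuous (fun y => - f y) x.
Proof. intros; now apply (continuous_opp f). Qed.

(* Uses a hypothesis [continuous_R f] on a goal [continuous f x] (f possibly
   eta-expanded); the comparison is syntactic, to avoid unfolding definitions. *)
Ltac apply_continuous_hyp :=
  match goal with
  | |- continuous ?e _ =>
    let f := match e with fun y => ?f y => f | _ => e end in
    match goal with H : continuous_R ?f' |- _ => constr_eq f f'; apply H end
  end.

Ltac solve_continuous :=
  repeat lazymatch goal with
  | |- continuous (fun _ => ?c) _ => apply continuous_const
  | |- continuous (fun y => y) _ => apply continuous_id
  | |- continuous (fun y => @?f y * @?g y) _ => apply (continuous_Rmult f g)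
  | |- continuous (fun y => @?f y + @?g y) _ => apply (continuous_Rplus f g)
  | |- continuous (fun y => @?f y - @?g y) _ => apply (continuous_Rminus f g)
  | |- continuous (fun y => - @?f y) _ => apply (continuous_Ropp f)
  | |- continuous (fun y => exp (@?f y)) _ => apply (continuous_exp_comp f)
  | |- continuous _ _ => apply_continuous_hyp
  end.

Lemma is_derive_Rmult (f g : R -> R) x df dg :
  is_derive f x df -> is_derive g x dg ->
  is_derive (fun y => f y * g y) x (df * g x + f x * dg).
Proof. intros; apply (is_derive_mult f g); auto; intros; apply Rmult_comm. Qed.
Lemma is_derive_Rplus (f g : R -> R) x df dg :
  is_derive f x df -> is_derive g x dg -> is_derive (fun y => f y + g y) x (df + dg).
Proof. intros; now apply (is_derive_plus f g). Qed.
Lemma is_derive_Rminus (f g : R -> R) x df dg :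
  is_derive f x df -> is_derive g x dg -> is_derive (fun y => f y - g y) x (df - dg).
Proof. intros; now apply (is_derive_minus f g). Qed.

Lemma is_derive_Rexp (f : R -> R) x df :
  is_derive f x df -> is_derive (fun y => exp (f y)) x (df * exp (f x)).
Proof. intros; apply (is_derive_comp exp f); auto; apply is_derive_exp. Qed.

Lemma is_derive_eq (f : R -> R) (x l l' : R) : is_derive f x l -> l = l' -> is_derive f x l'.
Proof. now intros H <-. Qed.

Lemma continuous_R_of_derive (f df : R -> R) :
  (forall x, is_derive f x (df x)) -> continuous_R f.
Proof.
  intros H x. apply (ex_derive_continuous (K:=R_AbsRing) (V:=R_NormedModule)).
  eexists; apply H.
Qed.

Lemma cont_on_of_continuous_R T f : continuous_R f -> cont_on T f.
Proof.
  intros Hf x _. eapply filterlim_filter_le_1; [|apply Hf].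
  intros P HP. unfold within. eapply filter_imp; [|exact HP]. auto.
Qed.

(* Clamping to [0,a]: the tool both for extending functions given on [0,T]
   to all of R and for building admissible deviations with values in [0,1]. *)
Definition clamp (a t : R) : R := Rmin a (Rmax 0 t).

Lemma clamp_in a t : 0 <= a -> 0 <= clamp a t <= a.
Proof. intros; unfold clamp, Rmin, Rmax; repeat destruct Rle_dec; lra. Qed.

Lemma clamp_id a t : 0 <= t <= a -> clamp a t = t.
Proof. intros; unfold clamp, Rmin, Rmax; repeat destruct Rle_dec; lra. Qed.

Lemma clamp_lipschitz a t s : Rabs (clamp a t - clamp a s) <= Rabs (t - s).
Proof.
  unfold clamp, Rmin, Rmax, Rabs; repeat destruct Rle_dec; repeat destruct Rcase_abs; lra.
Qed.

(* Being 1-Lipschitz with values in [0,a], clamp a is continuous into [0,a]. *)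
Lemma clamp_continuous_within a x : 0 <= a ->
  filterlim (clamp a) (locally x) (within (fun y => 0 <= y <= a) (locally (clamp a x))).
Proof.
  intros Ha P [d Hd]. exists d. intros y Hy.
  apply Hd; [|apply clamp_in; lra].
  eapply Rle_lt_trans; [apply clamp_lipschitz|exact Hy].
Qed.

Lemma clamp_continuous a x : 0 <= a -> continuous (clamp a) x.
Proof.
  intros Ha. eapply filterlim_filter_le_2; [|apply (clamp_continuous_within a x Ha)].
  intros P HP. unfold within. eapply filter_imp; [|exact HP]. auto.
Qed.

Definition extend (T : R) (f : R -> R) : R -> R := fun t => f (clamp T t).

Lemma extend_continuous T f : 0 <= T -> cont_on T f -> continuous_R (extend T f).
Proof.
  intros HT Hf x. unfold continuous, extend. eapply filterlim_comp;
    [apply clamp_continuous_within; auto | apply Hf, clamp_in; auto].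
Qed.

Lemma extend_eq T f t : 0 <= t <= T -> extend T f t = f t.
Proof. intros; unfold extend; now rewrite clamp_id. Qed.

Lemma extend_is_derive T f t l : 0 < t < T -> is_derive f t l -> is_derive (extend T f) t l.
Proof.
  intros Ht Hd. eapply is_derive_ext_loc; [|exact Hd].
  apply (locally_interval _ t 0 T); simpl; try lra.
  intros; symmetry; apply extend_eq; lra.
Qed.

Lemma ex_RInt_continuous_R f a b : continuous_R f -> ex_RInt f a b.
Proof. intros; apply (ex_RInt_continuous (V:=R_CompleteNormedModule)); auto. Qed.

Lemma RInt_upper_is_derive f a t : continuous_R f -> is_derive (fun s => RInt f a s) t (f t).
Proof.
  intros Hf. apply is_derive_RInt with a; [|apply Hf].
  apply filter_forall; intros.
  apply (RInt_correct (V:=R_CompleteNormedModule)), ex_RInt_continuous_R; auto.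
Qed.

Lemma RInt_lower_is_derive f b t : continuous_R f -> is_derive (fun s => RInt f s b) t (- f t).
Proof.
  intros Hf. apply (is_derive_RInt' f (fun s => RInt f s b) t b); [|apply Hf].
  apply filter_forall; intros.
  apply (RInt_correct (V:=R_CompleteNormedModule)), ex_RInt_continuous_R; auto.
Qed.

Lemma derive_zero_const G a b : a <= b -> continuous_R G ->
  (forall x, a < x < b -> is_derive G x 0) -> G b = G a.
Proof.
  intros Hab Hc Hd.
  destruct (MVT_gen G a b (fun _ => 0)) as [c [_ Hc']].
  - rewrite Rmin_left, Rmax_right by lra. auto.
  - intros; apply continuity_pt_filterlim, Hc.
  - lra.
Qed.

Lemma RInt_zero a b : RInt (fun _ => 0) a b = 0.
Proof. rewrite RInt_const. unfold scal; simpl; unfold mult; simpl; ring. Qed.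

Lemma RInt_nonpos m a b : a <= b -> continuous_R m ->
  (forall x, a < x < b -> m x <= 0) -> RInt m a b <= 0.
Proof.
  intros Hab Hm Hle. rewrite <- (RInt_zero a b).
  apply RInt_le; auto using ex_RInt_continuous_R.
  apply ex_RInt_continuous_R; intro; apply continuous_const.
Qed.

(* If a continuous m <= 0 on [0,T] has nonnegative integral, m vanishes on [0,T]:
   otherwise m is bounded away from 0 on a subinterval, making the integral negative. *)
Lemma nonpos_integral_zero m T : 0 < T -> continuous_R m ->
  (forall t, 0 <= t <= T -> m t <= 0) -> 0 <= RInt m 0 T ->
  forall t, 0 <= t <= T -> m t = 0.
Proof.
  intros HT Hm Hle Hint t Ht.
  destruct (Rle_lt_or_eq_dec _ _ (Hle t Ht)) as [Hneg|]; [exfalso|assumption].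
  assert (Hnear : locally t (fun s => m s < 0)).
  { apply (Hm t (fun y => y < 0)). exists (mkposreal _ (Ropp_0_gt_lt_contravar _ Hneg)).
    intros y Hy. apply Rabs_lt_between' in Hy. simpl in Hy. lra. }
  destruct Hnear as [d Hd].
  pose proof (cond_pos d) as Hdpos.
  set (c := Rmax 0 (t - d / 2)). set (e := Rmin T (t + d / 2)).
  assert (Hce : 0 <= c < e /\ e <= T).
  { unfold c, e, Rmax, Rmin; repeat destruct Rle_dec; lra. }
  assert (Hmid : RInt m c e < 0).
  { rewrite <- (RInt_zero c e). apply RInt_lt; try lra.
    - intros; apply continuous_const.
    - intros; apply Hm.
    - intros x Hx. apply Hd. apply Rabs_lt_between'.
      unfold c, e, Rmax, Rmin in Hx; repeat destruct Rle_dec; simpl; lra. }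
  assert (Hleft : RInt m 0 c <= 0) by (apply RInt_nonpos; [lra | exact Hm | intros; apply Hle; lra]).
  assert (Hright : RInt m e T <= 0) by (apply RInt_nonpos; [lra | exact Hm | intros; apply Hle; lra]).
  rewrite <- (RInt_Chasles m 0 c T), <- (RInt_Chasles m c e T) in Hint
    by apply ex_RInt_continuous_R, Hm.
  change (0 <= RInt m 0 c + (RInt m c e + RInt m e T)) in Hint. lra.
Qed.

(* Solutions of a linear equation x' = a x with x(0) > 0 stay positive:
   x exp(-int_0^t a) is constant. *)
Lemma linear_ode_positive T x a : 0 < T -> cont_on T x -> continuous_R a ->
  (forall t, 0 < t < T -> is_derive x t (a t * x t)) -> 0 < x 0 ->
  forall t, 0 <= t <= T -> 0 < x t.
Proof.
  intros HT Hx Ha Hd H0 t Ht.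
  set (Z := fun s => extend T x s * exp (- RInt a 0 s)).
  assert (Hint : forall s, is_derive (fun s => - RInt a 0 s) s (- a s))
    by (intro; apply (is_derive_opp (fun s => RInt a 0 s)), RInt_upper_is_derive; auto).
  assert (Zt : Z t = Z 0).
  { apply derive_zero_const; try lra.
    - intro y. apply continuous_Rmult; [apply extend_continuous; auto; lra|].
      apply continuous_exp_comp, (continuous_R_of_derive _ _ Hint).
    - intros s Hs. eapply is_derive_eq.
      + apply is_derive_Rmult; [apply extend_is_derive, Hd; lra|].
        apply is_derive_Rexp, Hint.
      + rewrite extend_eq by lra. ring. }
  unfold Z in Zt. rewrite RInt_point, extend_eq, extend_eq in Zt by lra.
  change (zero : R) with 0 in Zt. rewrite Ropp_0, exp_0, Rmult_1_r in Zt.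
  pose proof (exp_pos (- RInt a 0 t)). nra.
Qed.

(* The deviation clamp 1 (gv - phi) moves the exposure gv against the sign of phi;
   it leaves gv unchanged only if gv is already at the bound phi pushes towards. *)
Lemma clamp_step_sign gv phi : 0 <= gv <= 1 -> (clamp 1 (gv - phi) - gv) * phi <= 0.
Proof.
  intros Hg. unfold clamp, Rmin, Rmax. repeat destruct Rle_dec; nra.
Qed.

Lemma clamp_step_stationary gv phi : 0 <= gv <= 1 -> (clamp 1 (gv - phi) - gv) * phi = 0 ->
  (phi < 0 -> gv = 1) /\ (0 < phi -> gv = 0).
Proof.
  intros Hg E. apply Rmult_integral in E.
  unfold clamp, Rmin, Rmax in E. split; intro Hphi; repeat destruct Rle_dec; lra.
Qed.

(* Adjoint calculus for one individual facing a fixed infection pressure k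
   (infection hazard per unit of own exposure) while the population plays g. *)
Section Adjoint.
Variables (T B C Rw : R) (g k : R -> R).
Hypotheses (Hg : continuous_R g) (Hk : continuous_R k).

(* Survival probability of an individual with exposure h: P' = - h k P, P 0 = 1. *)
Definition survival (h : R -> R) (t : R) : R := exp (- RInt (fun s => h s * k s) 0 t).

Definition cost (h : R -> R) : R :=
  RInt (fun t => survival h t * h t * (- B + C * k t)) 0 T - Rw * survival h T.

(* The adjoint: the solution of lam' = g (B - k (C - lam)), lam T = - Rw,
   written with the integrating factor survival g. *)
Definition adjoint (t : R) : R :=
  (- Rw * survival g T - RInt (fun s => survival g s * g s * (B - k s * C)) t T)
  / survival g t.

(* The switching function: the marginal cost of exposure at time t. *)
Definition switching (t : R) : R := - B + k t * (C - adjoint t).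

Lemma survival_is_derive h t : continuous_R h ->
  is_derive (survival h) t (- (h t * k t) * survival h t).
Proof.
  intros Hh. eapply is_derive_eq.
  - apply is_derive_Rexp, (is_derive_opp (fun t => RInt (fun s => h s * k s) 0 t)).
    apply RInt_upper_is_derive. intro; solve_continuous.
  - reflexivity.
Qed.

Lemma survival_continuous h : continuous_R h -> continuous_R (survival h).
Proof. intros; eapply continuous_R_of_derive; intros; apply survival_is_derive; auto. Qed.

Lemma survival_pos h t : 0 < survival h t.
Proof. apply exp_pos. Qed.

Lemma survival_zero h : survival h 0 = 1.
Proof.
  unfold survival. rewrite RInt_point. change (zero : R) with 0.
  rewrite Ropp_0. apply exp_0.
Qed.

Lemma adjoint_is_derive t : is_derive adjoint t (g t * (B - k t * (C - adjoint t))).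
Proof.
  pose proof (survival_continuous g Hg).
  eapply is_derive_eq.
  - apply is_derive_div.
    + apply is_derive_Rminus; [apply is_derive_const|].
      apply RInt_lower_is_derive. intro; solve_continuous.
    + apply survival_is_derive; auto.
    + apply Rgt_not_eq, survival_pos.
  - pose proof (survival_pos g t). unfold adjoint. change (zero : R) with 0. field. lra.
Qed.

Lemma adjoint_continuous : continuous_R adjoint.
Proof. eapply continuous_R_of_derive; intros; apply adjoint_is_derive. Qed.

Lemma adjoint_terminal : adjoint T = - Rw.
Proof.
  unfold adjoint. rewrite RInt_point. pose proof (survival_pos g T).
  change (zero : R) with 0. field. lra.
Qed.

(* Cost decomposition: J(h) = lam(0) + int P_h (h - g) phi, obtained by checking that
   P_h lam + int_0^t (running cost) - int_0^t P_h (h - g) phi has zero derivative. *)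
Lemma cost_identity h : 0 <= T -> continuous_R h ->
  cost h = adjoint 0 + RInt (fun t => survival h t * (h t - g t) * switching t) 0 T.
Proof.
  intros HT Hh.
  pose proof (survival_continuous h Hh). pose proof adjoint_continuous.
  set (run := fun t => survival h t * h t * (- B + C * k t)).
  set (dev := fun t => survival h t * (h t - g t) * switching t).
  assert (Hrun : continuous_R run) by (intro; unfold run; solve_continuous).
  assert (Hdev : continuous_R dev) by (intro; unfold dev, switching; solve_continuous).
  set (G := fun t => survival h t * adjoint t + RInt run 0 t - RInt dev 0 t).
  assert (HG : forall t, is_derive G t 0).
  { intro t. eapply is_derive_eq.
    - apply is_derive_Rminus; [apply is_derive_Rplus|apply RInt_upper_is_derive, Hdev].
      + apply is_derive_Rmult; [apply survival_is_derive, Hh | apply adjoint_is_derive].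
      + apply RInt_upper_is_derive, Hrun.
    - unfold run, dev, switching. ring. }
  assert (GT : G T = G 0)
    by (apply derive_zero_const; [exact HT | exact (continuous_R_of_derive _ _ HG) | intros; apply HG]).
  unfold G in GT. rewrite !RInt_point, adjoint_terminal, survival_zero in GT.
  change (zero : R) with 0 in GT. unfold cost. fold run dev. lra.
Qed.

Lemma cost_candidate : 0 <= T -> cost g = adjoint 0.
Proof.
  intros HT. rewrite cost_identity by auto.
  rewrite (RInt_ext _ (fun _ => 0)) by (intros; rewrite Rminus_diag, Rmult_0_r, Rmult_0_l; reflexivity).
  rewrite RInt_zero. ring.
Qed.

(* The deviation clamp 1 (g - phi) is a descent direction, so its
   cost excess int P (dev - g) phi, of a nonpositive integrand, must vanish. *)
Lemma first_order_condition : 0 < T -> (forall t, 0 <= g t <= 1) ->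
  (forall h, continuous_R h -> (forall t, 0 <= h t <= 1) -> cost g <= cost h) ->
  forall t, 0 <= t <= T -> (switching t < 0 -> g t = 1) /\ (0 < switching t -> g t = 0).
Proof.
  intros HT Hg01 Hopt.
  pose proof adjoint_continuous.
  set (dev := fun t => clamp 1 (g t - switching t)).
  assert (Hdev : continuous_R dev).
  { intro x. apply (continuous_comp (fun t => g t - switching t) (clamp 1)).
    - unfold switching; solve_continuous.
    - apply clamp_continuous; lra. }
  assert (Hdev01 : forall t, 0 <= dev t <= 1) by (intro; apply clamp_in; lra).
  set (m := fun t => survival dev t * ((dev t - g t) * switching t)).
  assert (Hm : continuous_R m).
  { pose proof (survival_continuous dev Hdev). intro; unfold m, switching; solve_continuous. }
  assert (Hm_nonpos : forall t, 0 <= t <= T -> m t <= 0).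
  { intros t _. unfold m. rewrite <- (Rmult_0_r (survival dev t)).
    apply Rmult_le_compat_l; [apply Rlt_le, survival_pos | apply clamp_step_sign, Hg01]. }
  assert (Hm_int : 0 <= RInt m 0 T).
  { pose proof (Hopt dev Hdev Hdev01) as Hle.
    rewrite (cost_candidate (Rlt_le _ _ HT)), (cost_identity dev (Rlt_le _ _ HT) Hdev) in Hle.
    rewrite (RInt_ext _ m) in Hle by (intros; unfold m; rewrite Rmult_assoc; reflexivity). lra. }
  intros t Ht. apply clamp_step_stationary; auto.
  pose proof (nonpos_integral_zero m T HT Hm Hm_nonpos Hm_int t Ht) as Hzero.
  apply Rmult_integral in Hzero as [Hzero|Hzero]; [|exact Hzero].
  pose proof (survival_pos dev t). lra.
Qed.

End Adjoint.

Definition pressure (beta T : R) (geq I : R -> R) : R -> R :=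
  fun t => beta * extend T geq t * extend T I t.

Lemma pressure_continuous beta T geq I : 0 <= T -> cont_on T geq -> cont_on T I ->
  continuous_R (pressure beta T geq I).
Proof.
  intros HT Hg HI x. pose proof (extend_continuous T geq HT Hg).
  pose proof (extend_continuous T I HT HI). unfold pressure; solve_continuous.
Qed.

Section Equilibrium.
Variables (T beta B C Rw : R) (geq I : R -> R).
Hypotheses (HT : 0 <= T) (Hgeq : cont_on T geq) (HI : cont_on T I).

Let k : R -> R := pressure beta T geq I.

Lemma survival_solves_P h' h : continuous_R h -> (forall t, 0 <= t <= T -> h' t = h t) ->
  solves_P beta T geq I h' (survival k h).
Proof.
  intros Hh Eh. pose proof (pressure_continuous beta T geq I HT Hgeq HI).
  split; [apply cont_on_of_continuous_R, survival_continuous; auto|].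
  split; [apply survival_zero|].
  intros t Ht. eapply is_derive_eq; [apply survival_is_derive; auto|].
  unfold k, pressure. rewrite !extend_eq, Eh by lra. ring.
Qed.

Lemma Jcost_survival h' h : (forall t, 0 <= t <= T -> h' t = h t) ->
  Jcost beta B C Rw T geq I h' (survival k h) = cost T B C Rw k h.
Proof.
  intros Eh. unfold Jcost, cost. f_equal. apply RInt_ext. intros x Hx.
  rewrite Rmin_left, Rmax_right in Hx by lra.
  unfold k, pressure. rewrite !extend_eq, Eh by lra. ring_simplify. reflexivity.
Qed.

Lemma equilibrium_optimal :
  (forall ga P Peq,
      admissible T (fun _ => 1) ga ->
      solves_P beta T geq I ga P ->
      solves_P beta T geq I geq Peq ->
      Jcost beta B C Rw T geq I geq Peq <= Jcost beta B C Rw T geq I ga P) ->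
  forall h, continuous_R h -> (forall t, 0 <= h t <= 1) ->
  cost T B C Rw k (extend T geq) <= cost T B C Rw k h.
Proof.
  intros Heq h Hh Hh01.
  pose proof (extend_continuous T geq HT Hgeq) as Hg.
  assert (Eg : forall t, 0 <= t <= T -> geq t = extend T geq t)
    by (intros; symmetry; apply extend_eq; auto).
  rewrite <- (Jcost_survival geq _ Eg), <- (Jcost_survival h h) by auto.
  apply Heq; [|apply survival_solves_P; auto..].
  split; [apply cont_on_of_continuous_R, Hh | auto].
Qed.

End Equilibrium.

Lemma optimal_exposure_formula B C beta gv Iv lv :
  0 < B -> 0 < beta -> 0 < Iv -> 0 <= gv <= 1 ->
  (- B + beta * gv * Iv * (C - lv) < 0 -> gv = 1) ->
  (0 < - B + beta * gv * Iv * (C - lv) -> gv = 0) ->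
  (C > lv -> gv = Rmin (B / (beta * Iv * (C - lv))) 1) /\ (C <= lv -> gv = 1).
Proof.
  intros HB Hbeta HI Hg Hneg Hpos.
  assert (Hphi : - B + beta * gv * Iv * (C - lv) <= 0).
  { apply Rnot_lt_le. intro Hp. pose proof (Hpos Hp) as E. rewrite E in Hp. lra. }
  split; intro Hlv.
  - assert (Hd : 0 < beta * Iv * (C - lv)) by (apply Rmult_lt_0_compat; [nra | lra]).
    destruct (Rlt_dec (- B + beta * gv * Iv * (C - lv)) 0) as [Hlt|Hge].
    + rewrite (Hneg Hlt) in Hlt |- *. rewrite Rmin_right; auto.
      apply Rmult_le_reg_r with (beta * Iv * (C - lv)); auto.
      unfold Rdiv; rewrite (Rmult_assoc B), Rinv_l by lra. lra.
    + assert (E : gv = B / (beta * Iv * (C - lv))).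
      { apply Rmult_eq_reg_r with (beta * Iv * (C - lv)); [|lra].
        unfold Rdiv; rewrite (Rmult_assoc B), Rinv_l by lra. lra. }
      rewrite Rmin_left; lra.
  - apply Hneg. assert (0 <= beta * gv * Iv) by (apply Rmult_le_pos; [apply Rmult_le_pos|]; lra).
    nra.
Qed.

Theorem theorem1 (T beta gamma eps B C Rw : R)
  (HT : 0 < T) (Hbeta : 0 < beta) (Hgamma : 0 < gamma) (Heps : 0 < eps)
  (HB : 0 < B) (HC : 0 < C) (HR : 0 < Rw)
  (geq S I : R -> R)
  (Hgeq : admissible T (fun _ => 1) geq)
  (HSI : solves_SI beta gamma eps T geq S I)
  (Heq : forall ga P Peq,
      admissible T (fun _ => 1) ga ->
      solves_P beta T geq I ga P ->
      solves_P beta T geq I geq Peq ->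
      Jcost beta B C Rw T geq I geq Peq <= Jcost beta B C Rw T geq I ga P) :
  exists lam : R -> R,
    cont_on T lam /\ lam T = - Rw /\
    (forall t, 0 <= t <= T ->
       (C > lam t -> geq t = Rmin (B / (beta * I t * (C - lam t))) 1) /\
       (C <= lam t -> geq t = 1)) /\
    S 0 = 1 - eps /\ I 0 = eps /\
    (forall t, 0 < t < T ->
       is_derive S t (- beta * (geq t)^2 * S t * I t) /\
       is_derive I t (beta * (geq t)^2 * S t * I t - gamma * I t) /\
       is_derive lam t (geq t * (B - beta * I t * geq t * (C - lam t)))).
Proof.
  destruct Hgeq as [Hgeq_cont Hgeq01].
  destruct HSI as (HS & HI & HS0 & HI0 & HSI).
  assert (HT0 : 0 <= T) by lra.
  set (g := extend T geq). set (k := pressure beta T geq I).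
  assert (Hg : continuous_R g) by (apply extend_continuous; auto).
  assert (Hk : continuous_R k) by (apply pressure_continuous; auto).
  assert (Eg : forall t, 0 <= t <= T -> g t = geq t) by (intros; apply extend_eq; auto).
  assert (EI : forall t, 0 <= t <= T -> extend T I t = I t) by (intros; apply extend_eq; auto).
  (* The infected fraction stays positive: I' = (beta g^2 S - gamma) I. *)
  assert (Ipos : forall t, 0 <= t <= T -> 0 < I t).
  { pose proof (extend_continuous T S HT0 HS).
    apply (linear_ode_positive T I (fun t => beta * g t * g t * extend T S t - gamma));
      auto; [intro; solve_continuous | intros t Ht | lra].
    eapply is_derive_eq; [apply HSI; auto|]. rewrite Eg, extend_eq by lra. ring. }
  assert (Hfoc := first_order_condition T B C Rw g k Hg Hk HT
    (fun t => Hgeq01 _ (clamp_in T t HT0)) (equilibrium_optimal T beta B C Rw geq I HT0 Hgeq_cont HI Heq)).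
  exists (adjoint T B C Rw g k).
  split; [apply cont_on_of_continuous_R, adjoint_continuous; auto|].
  split; [apply adjoint_terminal|].
  split.
  - intros t Ht. destruct (Hfoc t Ht) as [Hneg Hpos].
    unfold switching, k, pressure in Hneg, Hpos. fold g in Hneg, Hpos.
    rewrite Eg, EI in Hneg, Hpos by lra.
    apply optimal_exposure_formula; auto.
  - split; [exact HS0|]. split; [exact HI0|].
    intros t Ht. destruct (HSI t Ht) as [HdS HdI].
    split; [exact HdS|]. split; [exact HdI|].
    eapply is_derive_eq; [apply adjoint_is_derive; auto|].
    unfold k, pressure. fold g. rewrite Eg, EI by lra. ring.
Qed.
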